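(* Let $m,k\in\mathbb{N}$ and let $\beta,\gamma\in\mathbb{C}$ with $\beta-k-1,\ -m-k-\gamma,\ \beta-\gamma-m-k\notin\mathbb{Z}_0^-$. Then \[ {}_3F_2\left[\begin{array}{r} -m,\ \beta-k-1,\ -m-k-\gamma;\\ -m-k,\ \beta-\gamma-m-k;\end{array}1\right]_m=\frac{\left(\beta\right)_m\left(\gamma\right)_m}{\left(1+k\right)_m\left(1+k+\gamma-\beta\right)_m}. \]
   Context: $\mathbb{N}=\{1,2,3,\dots\}$, $\mathbb{Z}_0^-=\{0,-1,-2,\dots\}$. For $a\in\mathbb{C}$ and $n\in\mathbb{N}_0$, $(a)_0=1$ and $(a)_n=a(a+1)\cdots(a+n-1)$. For $N\in\mathbb{N}_0$, ${}_3F_2\left[\begin{array}{r} a_1,a_2,a_3;\\ b_1,b_2;\end{array}z\right]_N=\sum_{n=0}^{N}\frac{(a_1)_n(a_2)_n(a_3)_n}{(b_1)_n(b_2)_n}\frac{z^n}{n!}$ (the sum of the first $N+1$ terms), defined whenever $(b_1)_n(b_2)_n\neq0$ for $0\le n\le N$. *)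

From HB Require Import structures.
From mathcomp Require Import all_boot all_order all_algebra.
From mathcomp Require Import complex.
From mathcomp Require Import Rstruct.
From Stdlib Require Import Reals.
Set Implicit Arguments. Unset Strict Implicit. Unset Printing Implicit Defensive.
Import Order.TTheory GRing.Theory Num.Theory.
Local Open Scope ring_scope.

Notation CC := (complex Rdefinitions.R).

Definition poch (a : CC) (n : nat) : CC := \prod_(i < n) (a + i%:R).

Definition nonpos_int (z : CC) : Prop := exists n : nat, z = - (n%:R).

Definition F32_trunc (a1 a2 a3 b1 b2 z : CC) (N : nat) : CC :=
  \sum_(n < N.+1) (poch a1 n * poch a2 n * poch a3 n)
                   / (poch b1 n * poch b2 n) * z ^+ n / (n`!)%:R.

(* The sum is a terminating balanced (Saalschutzian) 3F2: with
   a = beta - k - 1, b = -m - k - gamma and c = -m - k, its lower parameters are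
   c and 1 + a + b - c - m.  The Pfaff-Saalschutz theorem evaluates it as
   (c - a)_m (c - b)_m / ((c)_m (c - a - b)_m), and the reflection formula
   (1 - x - m)_m = (-1)^m (x)_m turns this into the stated quotient.
   Pfaff-Saalschutz itself is proved in the denominator-free form
     sum_j C(n,j) (a)_j (b)_j (c + j)_(n-j) (c - a - b)_(n-j) = (c - a)_n (c - b)_n
   by induction on n: the summands satisfy a first-order recurrence in n up to
   a telescoping term (a WZ pair), so both sides obey the same recurrence. *)

From mathcomp Require Import all_boot all_order all_algebra complex Rstruct.
From mathcomp Require Import ring zify.
Set Implicit Arguments. Unset Strict Implicit. Unset Printing Implicit Defensive.
Import GRing.Theory Num.Theory.
Local Open Scope ring_scope.

Lemma poch0 x : poch x 0 = 1.
Proof. by rewrite /poch big_ord0. Qed.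

Lemma pochS x n : poch x n.+1 = poch x n * (x + n%:R).
Proof. by rewrite /poch big_ord_recr. Qed.

Lemma pochSl x n : poch x n.+1 = x * poch (x + 1) n.
Proof.
rewrite /poch big_ord_recl addr0; congr (_ * _).
by apply: eq_bigr => i _; rewrite lift0 /= -natr1; ring.
Qed.

Lemma pochD x j r : poch x (j + r) = poch x j * poch (x + j%:R) r.
Proof.
elim: r => [|r IH]; first by rewrite addn0 poch0 mulr1.
by rewrite addnS !pochS IH natrD mulrA addrA.
Qed.

Lemma poch_reflectD x j r :
  poch (1 - x - (j + r)%:R) j * poch x r = (-1) ^+ j * poch x (j + r).
Proof.
elim: j => [|j IH]; first by rewrite poch0 expr0 !mul1r.
rewrite pochSl addSn.
have -> : 1 - x - (j + r).+1%:R + 1 = 1 - x - (j + r)%:R by rewrite -natr1; ring.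
rewrite -mulrA IH pochS exprS -natr1; ring.
Qed.

Lemma poch_reflect x n : poch (1 - x - n%:R) n = (-1) ^+ n * poch x n.
Proof. by have := poch_reflectD x n 0; rewrite addn0 poch0 mulr1. Qed.

Lemma poch_oppn m j : (j <= m)%N -> poch (- m%:R) j = (-1) ^+ j * (m ^_ j)%:R.
Proof.
elim: j => [|j IH] hj; first by rewrite poch0 ffactn0 mulr1.
rewrite pochS IH ?(ltnW hj) // ffactnSr natrM natrB ?(ltnW hj) // exprS.
ring.
Qed.

Section Saalschutz.

Variables a b c : CC.

Definition saalschutz_term n j : CC :=
  'C(n, j)%:R * poch a j * poch b j * poch (c + j%:R) (n - j)
  * poch (c - a - b) (n - j).

(* The WZ certificate of [saalschutz_term], as found by Zeilberger's algorithm. *)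
Definition saalschutz_cert n j : CC :=
  if j is i.+1 then
    - 'C(n, i)%:R * poch a j * poch b j * poch (c + i%:R) (n - i)
    * poch (c - a - b) (n - i)
  else 0.

Lemma saalschutz_termS n j : (j <= n.+1)%N ->
  saalschutz_term n.+1 j - (c - a + n%:R) * (c - b + n%:R) * saalschutz_term n j
  = saalschutz_cert n j.+1 - saalschutz_cert n j.
Proof.
rewrite /saalschutz_term /saalschutz_cert.
case: j => [_|j].
  by rewrite !subn0 !bin0 !pochS !poch0 !addr0; ring.
rewrite ltnS leq_eqVlt => /predU1P[-> | ltjn].
  by rewrite !subnn !binn bin_small // mulr0n !poch0; ring.
have [r ->] : exists r, n = (j.+1 + r)%N by exists (n - j.+1)%N; rewrite subnKC.
have -> : ((j.+1 + r).+1 - j.+1 = r.+1)%N by lia.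
have -> : (j.+1 + r - j.+1 = r)%N by lia.
have rSE : (j.+1 + r - j = r.+1)%N by lia.
set u : CC := 'C(j.+1 + r, j.+1)%:R; set v : CC := 'C(j.+1 + r, j)%:R.
have pascal : j.+1%:R * u = r.+1%:R * v by rewrite -!natrM mul_bin_left rSE.
rewrite rSE binS natrD -/u -/v (pochSl (c + j%:R)) (pochS a j.+1) (pochS b j.+1).
rewrite (pochS (c + j.+1%:R)) (pochS (c - a - b)).
have -> : c + j%:R + 1 = c + j.+1%:R by rewrite -natr1 addrA.
set X := poch a j.+1 * poch b j.+1 * poch (c + j.+1%:R) r * poch (c - a - b) r.
apply/eqP; rewrite -subr_eq0; apply/eqP.
transitivity (X * (c - a - b + r%:R) * (r.+1%:R * v - j.+1%:R * u)).
  rewrite /X; ring.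
by rewrite pascal subrr mulr0.
Qed.

Lemma sum_saalschutz_term n :
  \sum_(0 <= j < n.+1) saalschutz_term n j = poch (c - a) n * poch (c - b) n.
Proof.
elim: n => [|n IH]; first by rewrite big_nat1 /saalschutz_term !poch0 bin0 !mulr1.
set K := (c - a + n%:R) * (c - b + n%:R).
have sum_termS : \sum_(0 <= j < n.+2) saalschutz_term n.+1 j
                 = K * \sum_(0 <= j < n.+2) saalschutz_term n j.
  apply/eqP; rewrite -subr_eq0 mulr_sumr -sumrB.
  rewrite (@telescope_sumr_eq _ 0 n.+2 (saalschutz_cert n)) => [||j /andP[_ ltj]] //.
    by rewrite /saalschutz_cert bin_small // mulr0n oppr0 !mul0r addr0.
  by apply: saalschutz_termS.
have last0 : saalschutz_term n n.+1 = 0.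
  by rewrite /saalschutz_term bin_small // mulr0n !mul0r.
by rewrite sum_termS big_nat_recr //= last0 addr0 IH /K !pochS; ring.
Qed.

Lemma saalschutz_summand n j :
    (j <= n)%N -> poch c n != 0 -> poch (c - a - b) n != 0 ->
  poch (- n%:R) j * poch a j * poch b j
    / (poch c j * poch (1 + a + b - c - n%:R) j) * 1 ^+ j / (j`!)%:R
  = saalschutz_term n j / (poch c n * poch (c - a - b) n).
Proof.
move=> /subnKC <-; set r := (n - j)%N; set g := c - a - b.
rewrite pochD mulf_eq0 negb_or => /andP[cj0 cr0] gn0.
have gr0 : poch g r != 0 by move: gn0; rewrite addnC pochD mulf_eq0 negb_or => /andP[].
have -> : 1 + a + b - c - (j + r)%:R = 1 - g - (j + r)%:R by rewrite /g; ring.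
have -> : poch (1 - g - (j + r)%:R) j = (-1) ^+ j * poch g (j + r) / poch g r.
  by rewrite -poch_reflectD mulfK.
have f0 : (j`!)%:R != 0 :> CC by rewrite pnatr_eq0 -lt0n fact_gt0.
rewrite /saalschutz_term addKn poch_oppn ?leq_addr // -bin_ffact natrM expr1n mulr1.
by field; rewrite gn0 cr0 cj0 f0 gr0 signr_eq0.
Qed.

Lemma F32_trunc_saalschutz n :
    poch c n != 0 -> poch (1 + a + b - c - n%:R) n != 0 ->
  F32_trunc (- n%:R) a b c (1 + a + b - c - n%:R) 1 n
  = poch (c - a) n * poch (c - b) n / (poch c n * poch (c - a - b) n).
Proof.
move=> cn0 dn0.
have gn0 : poch (c - a - b) n != 0.
  move: dn0; have -> : 1 + a + b - c - n%:R = 1 - (c - a - b) - n%:R by ring.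
  by rewrite poch_reflect mulf_eq0 signr_eq0.
rewrite /F32_trunc -sum_saalschutz_term big_mkord mulr_suml.
by apply: eq_bigr => j _; rewrite (@saalschutz_summand n j (ltn_ord j) cn0 gn0).
Qed.

End Saalschutz.

Theorem mainTheorem4 (m k : nat) (beta gamma : CC)
  (hm : (0 < m)%N) (hk : (0 < k)%N)
  (h1 : ~ nonpos_int (beta - k%:R - 1))
  (h2 : ~ nonpos_int (- m%:R - k%:R - gamma))
  (h3 : ~ nonpos_int (beta - gamma - m%:R - k%:R)) :
  F32_trunc (- m%:R) (beta - k%:R - 1) (- m%:R - k%:R - gamma)
            (- m%:R - k%:R) (beta - gamma - m%:R - k%:R) 1 m
  = (poch beta m * poch gamma m)
    / (poch (1 + k%:R) m * poch (1 + k%:R + gamma - beta) m).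
Proof.
set a := beta - k%:R - 1; set b := - m%:R - k%:R - gamma; set c := - m%:R - k%:R.
have d_eq : beta - gamma - m%:R - k%:R = 1 + a + b - c - m%:R.
  by rewrite /a /b /c; ring.
have cm0 : poch c m != 0.
  apply/prodf_neq0 => i _.
  have -> : c + i%:R = - (m + k - i)%:R.
    by rewrite natrB ?natrD /c; [ring | have := ltn_ord i; lia].
  by rewrite oppr_eq0 pnatr_eq0 subn_eq0 -ltnNge ltn_addr.
have dm0 : poch (1 + a + b - c - m%:R) m != 0.
  rewrite -d_eq; apply/prodf_neq0 => i _; apply: contra_notN h3 => /eqP di0.
  by exists i; rewrite -(subr0 (_ - k%:R)) -di0; ring.
rewrite d_eq F32_trunc_saalschutz //.
have -> : c - a - b = 1 + k%:R + gamma - beta by rewrite /c /a /b; ring.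
have -> : c - a = 1 - beta - m%:R by rewrite /c /a; ring.
have -> : c - b = gamma by rewrite /c /b; ring.
have -> : c = 1 - (1 + k%:R) - m%:R by rewrite /c; ring.
rewrite !poch_reflect -(mulrA _ (poch beta m)) -(mulrA _ (poch (1 + k%:R) m)).
by rewrite invfM mulrACA mulfV ?signr_eq0 // mul1r.
Qed.
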